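(* There is a universal constant $C>0$ such that the following holds. For any integers $n\ge 2$, $k\ge 2$ and any $\varepsilon\in(0,1)$, there is a map $F:\{0,1\}^n\to\mathcal{Q}_s$ with $s\le C\log n\cdot\log(1/\varepsilon)$ such that: if each player $\ell\in[k]$, holding input $x_\ell\in\{0,1\}^n$, sends the quantum state $F(x_\ell)$ to the referee, then for any indices $i,j\in[k]$ and any strings $y,z\in\{0,1\}^n$ known to the referee (and not necessarily to the players), the referee can compute $\mathrm{MEQ}_{k,n}(i,j,y,z)$ with error probability at most $\varepsilon$, for every choice of inputs $x_1,\dots,x_k$.
   Context: $[k]=\{1,\dots,k\}$. For $s\ge1$, $\mathcal{Q}_s$ denotes the set of $s$-qubit pure quantum states (unit vectors in $\mathbb{C}^{2^s}$). There are $k$ players, player $\ell$ holding a private input $x_\ell\in\{0,1\}^n$, and a referee who does not know the inputs. The modified equality query is $\mathrm{MEQ}_{k,n}(i,j,y,z)=1$ if $x_i\oplus y=x_j\oplus z$ and $0$ otherwise, where $\oplus$ is bitwise XOR. ''The referee can compute the query with error at most $\varepsilon$'' means the referee has a quantum procedure (quantum operations and measurements, depending on $i,j,y,z$) acting on the received states whose output equals $\mathrm{MEQ}_{k,n}(i,j,y,z)$ with probability at least $1-\varepsilon$. The players share no randomness and no entanglement. *)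

From mathcomp Require Import all_boot all_algebra.
From mathcomp Require Import complex.
From mathcomp Require Import reals exp.
Set Implicit Arguments. Unset Strict Implicit. Unset Printing Implicit Defensive.
Import GRing.Theory Num.Theory.
Local Open Scope ring_scope.

Definition bits (n : nat) := {ffun 'I_n -> bool}.

Definition bxor n (a b : bits n) : bits n := [ffun t => xorb (a t) (b t)].

Definition MEQ k n (x : 'I_k -> bits n) (i j : 'I_k) (y z : bits n) : bool :=
  bxor (x i) y == bxor (x j) z.

Section Quantum.
Variable R : realType.
Local Notation C := (R[i]).

(* s-qubit pure states: unit vectors in C^(2^s) *)
Definition is_unit_vec d (v : 'cV[C]_d) : Prop :=
  \sum_(a < d) (v a 0)^* * v a 0 = 1.

(* basis of the joint Hilbert space of k registers of dimension d:
   functions 'I_k -> 'I_d (i.e. the k-fold tensor product) *)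
Definition joint_basis (k d : nat) := {ffun 'I_k -> 'I_d}.

Definition tensor_state k d (v : 'I_k -> 'cV[C]_d) : joint_basis k d -> C :=
  fun f => \prod_(l < k) v l (f l) 0.

Definition qform (T : finType) (M : T -> T -> C) (v : T -> C) : C :=
  \sum_(a : T) \sum_(b : T) (v a)^* * M a b * v b.

Definition psd (T : finType) (M : T -> T -> C) : Prop :=
  forall v : T -> C, 0 <= qform M v.

(* effect operator: 0 <= M <= I, i.e. {M, I - M} is a two-outcome POVM *)
Definition effect (T : finType) (M : T -> T -> C) : Prop :=
  psd M /\ psd (fun a b => (a == b)%:R - M a b).

(* probability of outcome "1" when measuring {M, I - M} on state v *)
Definition accept_prob (T : finType) (M : T -> T -> C) (v : T -> C) : C :=
  qform M v.

End Quantum.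

From mathcomp Require Import all_boot all_algebra.
From mathcomp Require Import complex.
From mathcomp Require Import reals exp.
From mathcomp Require Import order zify ring lra.
Set Implicit Arguments. Unset Strict Implicit. Unset Printing Implicit Defensive.
Import Order.TTheory GRing.Theory Num.Theory.

(* Fingerprinting with a balanced linear code.  By a Chernoff-type counting argument
   there are m = 2^r = O(n) parity vectors G_1, ..., G_m such that every nonzero x has
   odd parity against at least m/4 and at most 3m/4 of them.  The fingerprint
   h_x = m^(-1/2) (sum_c (-1)^<x, G_c> |c>) then satisfies |<h_u, h_v>| <= 1/2 for u <> v,
   and h_(x + y) is obtained from h_x by a diagonal sign change that the referee can apply
   himself.  Each player sends t copies of h_x; after correcting registers i and j by y and z
   the referee runs the swap test on every copy and accepts iff all of them accept.  This
   happens with probability ((1 + <h_(x_i + y), h_(x_j + z)>^2) / 2)^t, which is 1 on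
   equality and at most (5/8)^t otherwise; so r = O(log n) qubits per copy and
   t = O(log (1/eps)) copies suffice. *)

Definition parity n (x a : bits n) : bool := \big[addb/false]_(q < n) (x q && a q).

Local Notation code n m := {ffun 'I_m -> bits n}.

Definition zero_bits n : bits n := [ffun=> false].

Lemma parity_bxorl n (x w a : bits n) : parity (bxor x w) a = parity x a (+) parity w a.
Proof.
rewrite /parity -big_split /=; apply: eq_bigr => q _.
by rewrite /bxor ffunE; case: (x q); case: (w q); case: (a q).
Qed.

Definition balanced n (P : pred (bits n)) := (\sum_(a : bits n) (P a : nat)).*2 = 2 ^ n.

Lemma sum_nat_predC n (P : pred (bits n)) :
  \sum_(a : bits n) (P a : nat) + \sum_(a : bits n) (~~ P a : nat) = 2 ^ n.
Proof.
rewrite -big_split /= (eq_bigr (fun _ => 1)); last by move=> a _; case: (P a).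
by rewrite sum1_card card_ffun card_bool card_ord.
Qed.

Lemma balancedC n (P : pred (bits n)) : balanced P -> balanced (fun a => ~~ P a).
Proof. by rewrite /balanced; have := sum_nat_predC P; lia. Qed.

Lemma balanced_parity n (x : bits n) : x != zero_bits n -> balanced (parity x).
Proof.
move=> xnz; have [p xp] : exists p, x p.
  apply/existsP; apply: contraR xnz => /existsPn x0.
  by apply/eqP/ffunP => q; rewrite ffunE; apply/negbTE/x0.
pose flip (a : bits n) : bits n := [ffun q => if q == p then ~~ a q else a q].
have flipK : involutive flip.
  by move=> a; apply/ffunP => q; rewrite !ffunE; case: (q == p); rewrite ?negbK.
have parity_flip a : parity x (flip a) = ~~ parity x a.
  rewrite /parity (bigD1 p) //= [in RHS](bigD1 p) //= ffunE eqxx xp /= -addNb.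
  by congr addb; apply: eq_bigr => q /negbTE qp; rewrite ffunE qp.
have flipE : \sum_(a : bits n) (parity x a : nat) = \sum_(a : bits n) (~~ parity x a : nat).
  by rewrite (reindex_inj (inv_inj flipK)); apply: eq_bigr => a _; rewrite parity_flip.
by rewrite /balanced -addnn {2}flipE sum_nat_predC.
Qed.

Lemma sum_exp3_balanced n (P : pred (bits n)) :
  balanced P -> \sum_(a : bits n) 3 ^ P a = 2 ^ n.+1.
Proof.
move=> PE.
rewrite (eq_bigr (fun a => 1 + 2 * P a)); last by move=> a _; case: (P a).
rewrite big_split /= sum1_card card_ffun card_bool card_ord -big_distrr /=.
by rewrite mul2n PE expnS mul2n addnn.
Qed.

(* The exponential moment behind a Chernoff bound: averaged over all codes, 3^weight is 2^m. *)
Lemma sum_exp3_weight n m (P : pred (bits n)) : balanced P ->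
  \sum_(G : code n m) 3 ^ (\sum_(c < m) P (G c)) = (2 ^ n.+1) ^ m.
Proof.
move=> PE.
rewrite (eq_bigr (fun G : code n m => \prod_(c < m) 3 ^ P (G c)));
  last by move=> G _; rewrite expn_sum.
rewrite -(bigA_distr_bigA (fun (c : 'I_m) (a : bits n) => 3 ^ P a)) /=.
rewrite (eq_bigr (fun _ => 2 ^ n.+1)) => [|c _]; last exact: sum_exp3_balanced.
by rewrite prod_nat_const card_ord.
Qed.

Lemma count_heavy_codes n m (P : pred (bits n)) w : balanced P ->
  (\sum_(G : code n m) (w < \sum_(c < m) P (G c)) : nat) * 3 ^ w.+1
   <= (2 ^ n.+1) ^ m.
Proof.
move=> PE; rewrite -(sum_exp3_weight m PE) big_distrl /=; apply: leq_sum => G _.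
by case: ltnP => hw; rewrite ?mul0n // mul1n leq_pexp2l.
Qed.

Definition code_weight n m (x : bits n) (G : code n m) : nat :=
  \sum_(c < m) parity x (G c).

Definition unbalanced_code n M (G : code n (4 * M)) (x : bits n) : bool :=
  (3 * M < code_weight x G) || (3 * M < \sum_(c < 4 * M) ~~ parity x (G c)).

Lemma code_weight_bounds n M (G : code n (4 * M)) x :
  ~~ unbalanced_code G x -> M <= code_weight x G <= 3 * M.
Proof.
have total : code_weight x G + \sum_(c < 4 * M) ~~ parity x (G c) = 4 * M.
  rewrite /code_weight -big_split /= (eq_bigr (fun _ => 1)); last by move=> c _; case: parity.
  by rewrite sum1_card card_ord.
by rewrite /unbalanced_code negb_or -!leqNgt; move: total; lia.
Qed.

Lemma count_unbalanced_codes n M (x : bits n) : x != zero_bits n ->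
  (\sum_(G : code n (4 * M)) unbalanced_code G x) * 3 ^ (3 * M).+1
    <= 2 * (2 ^ n.+1) ^ (4 * M).
Proof.
move=> xnz; have Px := balanced_parity xnz.
apply: (@leq_trans ((\sum_(G : code n (4 * M)) (3 * M < code_weight x G)
    + \sum_(G : code n (4 * M)) (3 * M < \sum_(c < 4 * M) ~~ parity x (G c))) * 3 ^ (3 * M).+1)).
  rewrite leq_mul2r -big_split /=; apply/orP; right; apply: leq_sum => G _.
  by rewrite /unbalanced_code; case: (_ < _); case: (_ < _).
rewrite mulnDl mul2n -addnn; apply: leq_add; first exact: count_heavy_codes.
exact: (count_heavy_codes _ _ (balancedC Px)).
Qed.

Lemma code_count_ineq n M : 2 * n.+1 <= M -> 2 ^ n.+1 * 16 ^ M < 3 * 27 ^ M.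
Proof.
move=> hM; rewrite -(subnKC hM) !expnD !expnM mulnA -expnMn.
apply: (@leq_ltn_trans ((27 ^ 2) ^ n.+1 * 27 ^ (M - 2 * n.+1))).
  have exp_mono e a b : a <= b -> a ^ e <= b ^ e.
    by move=> ab; elim: e => // e IH; rewrite !expnS leq_mul.
  by apply: leq_mul; apply: exp_mono.
by rewrite -[X in X < _]mul1n ltn_pmul2r // muln_gt0 !expn_gt0.
Qed.

(* A union bound over the nonzero [x]: the unbalanced codes do not exhaust all codes. *)
Lemma balanced_code_exists n M : 2 * n.+1 <= M ->
  exists G : code n (4 * M),
    forall x, x != zero_bits n -> M <= code_weight x G <= 3 * M.
Proof.
move=> hM.
suff /existsP [G /forallP HG] :
    [exists G : code n (4 * M), [forall x, (x != zero_bits n) ==> ~~ unbalanced_code G x]].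
  by exists G => x xnz; apply: code_weight_bounds; move: (HG x); rewrite xnz.
apply: contraT => /existsPn allbad.
have some_bad (G : code n (4 * M)) :
    1 <= \sum_(x : bits n | x != zero_bits n) unbalanced_code G x.
  have /forallPn [x] := allbad G; rewrite negb_imply negbK => /andP[xnz bad].
  by rewrite (bigD1 x) //= bad.
have : #|code n (4 * M)| * 3 ^ (3 * M).+1
         <= 2 ^ n * (2 * (2 ^ n.+1) ^ (4 * M)).
  apply: (@leq_trans ((\sum_(x : bits n | x != zero_bits n)
      \sum_(G : code n (4 * M)) unbalanced_code G x) * 3 ^ (3 * M).+1)).
    rewrite leq_mul2r exchange_big /= -sum1_card; apply/orP; right.
    by apply: leq_sum => G _; exact: some_bad.
  rewrite big_distrl /=.
  apply: (@leq_trans (\sum_(x : bits n | x != zero_bits n) 2 * (2 ^ n.+1) ^ (4 * M))).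
    by apply: leq_sum => x; apply: count_unbalanced_codes.
  rewrite big_mkcond /=; apply: (@leq_trans (\sum_(x : bits n) 2 * (2 ^ n.+1) ^ (4 * M))).
    by apply: leq_sum => x _; case: ifP.
  by rewrite sum_nat_const card_ffun card_bool card_ord.
rewrite !card_ffun card_bool !card_ord -!expnM expnS (expnM 3 3 M).
have -> : 2 ^ n * (2 * 2 ^ (n.+1 * (4 * M))) = 2 ^ (n * (4 * M)) * (2 ^ n.+1 * 16 ^ M).
  by rewrite -[16 ^ M](expnM 2 4 M) -expnS -!expnD; congr (2 ^ _); nia.
by rewrite leq_pmul2l ?expn_gt0 // leqNgt code_count_ineq.
Qed.

Local Open Scope ring_scope.

Lemma sum_deltal (R : pzSemiRingType) (T : finType) (a : T) (F : T -> R) :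
  \sum_b (a == b)%:R * F b = F a.
Proof.
rewrite (bigD1 a) //= eqxx mul1r big1 ?addr0 // => b /negbTE.
by rewrite eq_sym => ->; rewrite mul0r.
Qed.

Lemma sum_deltar (R : pzSemiRingType) (T : finType) (a : T) (F : T -> R) :
  \sum_b F b * (b == a)%:R = F a.
Proof.
by rewrite (bigD1 a) //= eqxx mulr1 big1 ?addr0 // => b /negbTE ->; rewrite mulr0.
Qed.

Section Effects.
Variable R : realType.

Lemma conj_realC (x : R) : (x%:C%C)^* = x%:C%C :> R[i].
Proof. exact: conjc_real. Qed.

Lemma psd_eq (T : finType) (M1 M2 : T -> T -> R[i]) : M1 =2 M2 -> psd M1 -> psd M2.
Proof.
move=> E P v; rewrite /qform.
under eq_bigr => a _ do under eq_bigr => b _ do rewrite -E.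
exact: P.
Qed.

Lemma sum_normsq_ge0 (T : finType) (u : T -> R[i]) : 0 <= \sum_b (u b)^* * u b.
Proof. by apply: sumr_ge0 => b _; rewrite mulrC mul_conjC_ge0. Qed.

(* For a real symmetric idempotent [M], <v, M v> = |M v|^2. *)
Lemma psd_sym_idem (T : finType) (M : T -> T -> R) :
  (forall a b, M a b = M b a) -> (forall a c, \sum_b M a b * M b c = M a c) ->
  psd (fun a b => (M a b)%:C%C).
Proof.
move=> Ms Mi v; rewrite /qform.
pose u b := \sum_c (M b c)%:C%C * v c.
have uE a : u a = \sum_b (M a b)%:C%C * u b.
  rewrite /u; under [RHS]eq_bigr => b _ do rewrite big_distrr /=.
  rewrite exchange_big /=; apply: eq_bigr => c _.
  rewrite -(Mi a c) rmorph_sum big_distrl /=; apply: eq_bigr => b _.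
  by rewrite rmorphM mulrA.
have -> : \sum_a \sum_b (v a)^* * (M a b)%:C%C * v b = \sum_a (v a)^* * u a.
  by apply: eq_bigr => a _; rewrite /u big_distrr; apply: eq_bigr => b _; exact/esym/mulrA.
under eq_bigr => a _ do rewrite uE big_distrr /=.
rewrite exchange_big /=.
have -> : \sum_b \sum_a (v a)^* * ((M a b)%:C%C * u b) = \sum_b (u b)^* * u b.
  apply: eq_bigr => b _; rewrite /u rmorph_sum big_distrl /=; apply: eq_bigr => a _.
  by rewrite rmorphM /= conj_realC Ms mulrCA mulrA.
exact: sum_normsq_ge0.
Qed.

Lemma effect_sym_idem (T : finType) (M : T -> T -> R) :
  (forall a b, M a b = M b a) -> (forall a c, \sum_b M a b * M b c = M a c) ->
  effect (fun a b => (M a b)%:C%C).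
Proof.
move=> Ms Mi; split; first exact: psd_sym_idem.
apply: (@psd_eq _ (fun a b => ((a == b)%:R - M a b)%:C%C)).
  by move=> a b; rewrite rmorphB rmorph_nat.
apply: psd_sym_idem => [a b|a c]; first by rewrite Ms eq_sym.
under eq_bigr => b _ do rewrite mulrBl !mulrBr.
by rewrite !big_split /= !sumrN !sum_deltal sumrB sum_deltar Mi subrr subr0.
Qed.

Lemma psd_scalar (T : finType) (c : R) : 0 <= c -> psd (fun a b : T => ((a == b)%:R * c)%:C%C).
Proof.
move=> c0 v; rewrite /qform.
have -> : \sum_a \sum_b (v a)^* * ((a == b)%:R * c)%:C%C * v b
   = \sum_a c%:C%C * ((v a)^* * v a).
  apply: eq_bigr => a _.
  rewrite (bigD1 a) //= eqxx mul1r big1 ?addr0; first by rewrite mulrCA mulrA.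
  by move=> b /negbTE; rewrite eq_sym => ->; rewrite mul0r rmorph0 mulr0 mul0r.
by rewrite -big_distrr /= mulr_ge0 ?sum_normsq_ge0 // ler0c.
Qed.

Lemma effect_scalar (T : finType) (c : R) : 0 <= c <= 1 ->
  effect (fun a b : T => ((a == b)%:R * c)%:C%C).
Proof.
move=> /andP[c0 c1]; split; first exact: psd_scalar.
apply: (@psd_eq _ (fun a b => ((a == b)%:R * (1 - c))%:C%C)).
  by move=> a b; rewrite mulrBr mulr1 rmorphB /= rmorph_nat.
by apply: psd_scalar; rewrite subr_ge0.
Qed.

End Effects.

Section PairOperator.
Variables (R : comPzRingType) (T : finType) (k : nat) (i j : 'I_k).
Hypothesis neq_ij : i != j.

Definition spectator (l : 'I_k) := (l != i) && (l != j).

Lemma prod_pair_spectators (F : 'I_k -> R) :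
  \prod_l F l = F i * F j * \prod_(l | spectator l) F l.
Proof. by rewrite (bigD1 i) //= (bigD1 j) 1?eq_sym //= mulrA. Qed.

Lemma sum_ffun_fixed_pair (a b : T) (F : 'I_k -> T -> R) :
  \sum_(h : {ffun 'I_k -> T}) (h i == a)%:R * ((h j == b)%:R * \prod_(l | spectator l) F l (h l))
  = \prod_(l | spectator l) \sum_c F l c.
Proof.
have neq_ji : j != i by rewrite eq_sym.
pose G l c := if l == i then (c == a)%:R else if l == j then (c == b)%:R else F l c.
have GE (h : {ffun 'I_k -> T}) :
    (h i == a)%:R * ((h j == b)%:R * \prod_(l | spectator l) F l (h l)) = \prod_l G l (h l).
  rewrite prod_pair_spectators /G eqxx (negbTE neq_ji) eqxx mulrA; congr (_ * _).
  by apply: eq_bigr => l /andP[/negbTE -> /negbTE ->].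
rewrite (eq_bigr _ (fun h _ => GE h)) -(bigA_distr_bigA G) /=.
have sum_eq1 c0 : \sum_c ((c == c0)%:R : R) = 1.
  by rewrite -[RHS](sum_deltar c0 (fun=> 1)); apply: eq_bigr => c _ /=; rewrite mul1r.
rewrite prod_pair_spectators /G eqxx (negbTE neq_ji) eqxx !sum_eq1 !mul1r.
by apply: eq_bigr => l /andP[/negbTE -> /negbTE ->].
Qed.

Lemma sum_ffun_pair (Y : T -> T -> R) (F : 'I_k -> T -> R) :
  \sum_(h : {ffun 'I_k -> T}) Y (h i) (h j) * \prod_(l | spectator l) F l (h l)
  = \sum_a \sum_b Y a b * \prod_(l | spectator l) \sum_c F l c.
Proof.
have E (h : {ffun 'I_k -> T}) : Y (h i) (h j) * \prod_(l | spectator l) F l (h l)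
  = \sum_a \sum_b Y a b * ((h i == a)%:R * ((h j == b)%:R * \prod_(l | spectator l) F l (h l))).
  transitivity (\sum_a (h i == a)%:R * \sum_b (h j == b)%:R *
      (Y a b * \prod_(l | spectator l) F l (h l))); first by rewrite !sum_deltal.
  by apply: eq_bigr => a _; rewrite big_distrr; apply: eq_bigr => b _ /=; ring.
rewrite (eq_bigr _ (fun h _ => E h)) exchange_big /=.
apply: eq_bigr => a _; rewrite exchange_big /=; apply: eq_bigr => b _.
by rewrite -big_distrr /= sum_ffun_fixed_pair.
Qed.

(* The operator [K] on registers [i] and [j], tensored with the identity on the others. *)
Definition pair_op (K : T -> T -> T -> T -> R) (f g : {ffun 'I_k -> T}) : R :=
  (\prod_(l | spectator l) ((f l == g l)%:R : R)) * K (f i) (f j) (g i) (g j).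

Lemma pair_op_sym K : (forall a b a' b', K a b a' b' = K a' b' a b) ->
  forall f g, pair_op K f g = pair_op K g f.
Proof.
move=> Ks f g; rewrite /pair_op Ks; congr (_ * _).
by apply: eq_bigr => l _; rewrite eq_sym.
Qed.

Lemma pair_op_idem K :
  (forall a b a' b', \sum_x \sum_y K a b x y * K x y a' b' = K a b a' b') ->
  forall f g, \sum_h pair_op K f h * pair_op K h g = pair_op K f g.
Proof.
move=> Ki f g.
transitivity (\sum_(h : {ffun 'I_k -> T})
    (K (f i) (f j) (h i) (h j) * K (h i) (h j) (g i) (g j))
   * \prod_(l | spectator l) (((f l == h l)%:R : R) * (h l == g l)%:R)).
  by apply: eq_bigr => h _; rewrite /pair_op big_split /=; ring.
rewrite (sum_ffun_pair (fun a b => K (f i) (f j) a b * K a b (g i) (g j))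
  (fun l c => ((f l == c)%:R : R) * (c == g l)%:R)).
rewrite /pair_op -Ki mulrC big_distrl /=; apply: eq_bigr => a _; rewrite big_distrl /=.
by apply: eq_bigr => b _; congr (_ * _); apply: eq_bigr => l _; rewrite sum_deltal.
Qed.

Lemma qform_pair_op K (v : 'I_k -> T -> R) :
  (forall l, \sum_c v l c * v l c = 1) ->
  \sum_(f : {ffun 'I_k -> T}) \sum_(g : {ffun 'I_k -> T})
     (\prod_l v l (f l)) * pair_op K f g * (\prod_l v l (g l))
  = \sum_a \sum_b \sum_a' \sum_b' v i a * v j b * K a b a' b' * v i a' * v j b'.
Proof.
move=> vn.
have inner (f : {ffun 'I_k -> T}) :
  \sum_(g : {ffun 'I_k -> T}) pair_op K f g * (\prod_l v l (g l))
  = (\sum_a' \sum_b' K (f i) (f j) a' b' * v i a' * v j b') * \prod_(l | spectator l) v l (f l).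
  transitivity (\sum_(g : {ffun 'I_k -> T})
      (K (f i) (f j) (g i) (g j) * v i (g i) * v j (g j))
     * \prod_(l | spectator l) (((f l == g l)%:R : R) * v l (g l))).
    by apply: eq_bigr => g _; rewrite /pair_op prod_pair_spectators big_split /=; ring.
  rewrite (sum_ffun_pair (fun a b => K (f i) (f j) a b * v i a * v j b)
    (fun l c => ((f l == c)%:R : R) * v l c)) big_distrl /=.
  apply: eq_bigr => a _; rewrite big_distrl /=.
  by apply: eq_bigr => b _; congr (_ * _); apply: eq_bigr => l _; rewrite sum_deltal.
transitivity (\sum_(f : {ffun 'I_k -> T}) (v i (f i) * v j (f j) *
   (\sum_a' \sum_b' K (f i) (f j) a' b' * v i a' * v j b'))
   * \prod_(l | spectator l) (v l (f l) * v l (f l))).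
  apply: eq_bigr => f _.
  rewrite (eq_bigr (fun g => \prod_l v l (f l) * (pair_op K f g * \prod_l v l (g l))));
    last by move=> g _; rewrite mulrA.
  by rewrite -big_distrr /= inner prod_pair_spectators big_split /=; ring.
rewrite (sum_ffun_pair (fun a b => v i a * v j b *
   (\sum_a' \sum_b' K a b a' b' * v i a' * v j b')) (fun l c => v l c * v l c)).
apply: eq_bigr => a _; apply: eq_bigr => b _.
rewrite (eq_bigr (fun _ => 1)) ?big1_eq ?mulr1 => [|l _]; last exact: vn.
rewrite big_distrr; apply: eq_bigr => a' _; rewrite big_distrr; apply: eq_bigr => b' _ /=.
ring.
Qed.

End PairOperator.

Section SwapTest.
Variables (R : numFieldType) (m t : nat) (T : finType).
Variable (idx : T -> {ffun 'I_t -> 'I_m}).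
Hypothesis idx_bij : bijective idx.

Lemma sum_tensor_index (F : {ffun 'I_t -> 'I_m} -> R) : \sum_(a : T) F (idx a) = \sum_u F u.
Proof. by rewrite (reindex idx) //; apply: onW_bij. Qed.

Lemma sum_tensor_prod (H : 'I_t -> 'I_m -> R) :
  \sum_(a : T) \prod_q H q (idx a q) = \prod_q \sum_c H q c.
Proof. by rewrite (sum_tensor_index (fun u => \prod_q H q (u q))) bigA_distr_bigA. Qed.

Lemma sum2_tensor_prod (H : 'I_t -> 'I_m -> 'I_m -> R) :
  \sum_(a : T) \sum_(b : T) \prod_q H q (idx a q) (idx b q)
  = \prod_q \sum_c \sum_d H q c d.
Proof.
rewrite (eq_bigr (fun a => \prod_q \sum_d H q (idx a q) d)) => [|a _].
  exact: (sum_tensor_prod (fun q c => \sum_d H q c d)).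
exact: (sum_tensor_prod (fun q d => H q (idx a q) d)).
Qed.

Lemma sum4_tensor_prod (H : 'I_t -> 'I_m -> 'I_m -> 'I_m -> 'I_m -> R) :
  \sum_(a : T) \sum_(b : T) \sum_(a' : T) \sum_(b' : T)
     \prod_q H q (idx a q) (idx b q) (idx a' q) (idx b' q)
  = \prod_q \sum_c \sum_d \sum_c' \sum_d' H q c d c' d'.
Proof.
rewrite (eq_bigr (fun a => \sum_(b : T)
    \prod_q \sum_c' \sum_d' H q (idx a q) (idx b q) c' d')) => [|a _].
  exact: (sum2_tensor_prod (fun q c d => \sum_c' \sum_d' H q c d c' d')).
apply: eq_bigr => b _.
exact: (sum2_tensor_prod (fun q c' d' => H q (idx a q) (idx b q) c' d')).
Qed.

(* The projector onto the symmetric subspace of R^m (x) R^m, i.e. (I + SWAP) / 2. *)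
Definition swap_proj (x y x' y' : 'I_m) : R :=
  ((x == x')%:R * (y == y')%:R + (x == y')%:R * (y == x')%:R) / 2.

Lemma swap_proj_sym x y x' y' : swap_proj x y x' y' = swap_proj x' y' x y.
Proof.
by rewrite /swap_proj [x == x']eq_sym [y == y']eq_sym [x == y']eq_sym [y == x']eq_sym; ring.
Qed.

Lemma swap_projC x y x' y' : swap_proj y x x' y' = swap_proj x y x' y'.
Proof. rewrite /swap_proj; ring. Qed.

Lemma sum_swap_proj x y (G : 'I_m -> 'I_m -> R) :
  \sum_x' \sum_y' swap_proj x y x' y' * G x' y' = (G x y + G y x) / 2.
Proof.
transitivity (\sum_x' ((x == x')%:R * (G x' y / 2) + (y == x')%:R * (G x' x / 2))).
  apply: eq_bigr => x' _.
  transitivity (\sum_y' ((y == y')%:R * ((x == x')%:R * G x' y' / 2)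
     + (x == y')%:R * ((y == x')%:R * G x' y' / 2))).
    by apply: eq_bigr => y' _; rewrite /swap_proj; ring.
  by rewrite big_split /= !sum_deltal; ring.
by rewrite big_split /= !sum_deltal; ring.
Qed.

Lemma swap_proj_idem x y x' y' :
  \sum_x'' \sum_y'' swap_proj x y x'' y'' * swap_proj x'' y'' x' y' = swap_proj x y x' y'.
Proof.
by rewrite (sum_swap_proj x y (fun a b => swap_proj a b x' y')) swap_projC mulrDl -splitr.
Qed.

Lemma qform_swap_proj (u v : 'I_m -> R) :
  \sum_x \sum_y \sum_x' \sum_y' u x * v y * swap_proj x y x' y' * u x' * v y'
  = ((\sum_x u x * u x) * (\sum_y v y * v y) + (\sum_x u x * v x) ^+ 2) / 2.
Proof.
transitivity (\sum_x \sum_y u x * v y * ((u x * v y + u y * v x) / 2)).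
  apply: eq_bigr => x _; apply: eq_bigr => y _.
  rewrite -(sum_swap_proj x y (fun a b => u a * v b)) big_distrr /=; apply: eq_bigr => x' _.
  by rewrite big_distrr /=; apply: eq_bigr => y' _; ring.
have e1 : (\sum_x u x * u x) * (\sum_y v y * v y) = \sum_x \sum_y u x * u x * (v y * v y).
  by rewrite big_distrl /=; apply: eq_bigr => x _; rewrite big_distrr.
have e2 : (\sum_x u x * v x) ^+ 2 = \sum_x \sum_y u x * v x * (u y * v y).
  by rewrite expr2 big_distrl /=; apply: eq_bigr => x _; rewrite big_distrr.
rewrite e1 e2 -big_split big_distrl /=; apply: eq_bigr => x _.
by rewrite -big_split big_distrl /=; apply: eq_bigr => y _; ring.
Qed.

Definition tpow (h : 'I_m -> R) (a : T) : R := \prod_q h (idx a q).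

Lemma tpowM (h1 h2 : 'I_m -> R) a : tpow h1 a * tpow h2 a = tpow (fun c => h1 c * h2 c) a.
Proof. by rewrite /tpow -big_split. Qed.

Lemma sum_tpow_sq (h : 'I_m -> R) : \sum_a tpow h a * tpow h a = (\sum_c h c * h c) ^+ t.
Proof.
under eq_bigr do rewrite tpowM.
by rewrite (sum_tensor_prod (fun _ c => h c * h c)) prodr_const card_ord.
Qed.

Lemma tpow_sq_eq1 (s : 'I_m -> R) : (forall c, s c * s c = 1) -> forall a, tpow s a * tpow s a = 1.
Proof. by move=> s1 a; rewrite tpowM; apply: big1 => q _; exact: s1. Qed.

(* The swap test on each of the [t] copies, conjugated by the diagonal sign changes
   [tpow sy] and [tpow sz] on the two registers. *)
Definition signed_swap_test (sy sz : 'I_m -> R) (a b a' b' : T) : R :=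
  tpow sy a * tpow sz b * tpow sy a' * tpow sz b' *
  \prod_q swap_proj (idx a q) (idx b q) (idx a' q) (idx b' q).

Lemma signed_swap_test_sym sy sz a b a' b' :
  signed_swap_test sy sz a b a' b' = signed_swap_test sy sz a' b' a b.
Proof. by rewrite /signed_swap_test; under eq_bigr do rewrite swap_proj_sym; ring. Qed.

Lemma signed_swap_test_idem sy sz :
  (forall c, sy c * sy c = 1) -> (forall c, sz c * sz c = 1) ->
  forall a b a' b', \sum_x \sum_y signed_swap_test sy sz a b x y * signed_swap_test sy sz x y a' b'
                    = signed_swap_test sy sz a b a' b'.
Proof.
move=> sy1 sz1 a b a' b'.
transitivity (tpow sy a * tpow sz b * tpow sy a' * tpow sz b' *
  \sum_x \sum_y \prod_q (swap_proj (idx a q) (idx b q) (idx x q) (idx y q) *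
                         swap_proj (idx x q) (idx y q) (idx a' q) (idx b' q))).
  rewrite big_distrr /=; apply: eq_bigr => x _; rewrite big_distrr /=; apply: eq_bigr => y _.
  rewrite big_split /= /signed_swap_test.
  transitivity (tpow sy a * tpow sz b * tpow sy a' * tpow sz b' *
     (\prod_q swap_proj (idx a q) (idx b q) (idx x q) (idx y q) *
      \prod_q swap_proj (idx x q) (idx y q) (idx a' q) (idx b' q)) *
     (tpow sy x * tpow sy x) * (tpow sz y * tpow sz y)); first by ring.
  by rewrite !tpow_sq_eq1 // !mulr1.
rewrite /signed_swap_test (sum2_tensor_prod (fun q c d =>
  swap_proj (idx a q) (idx b q) c d * swap_proj c d (idx a' q) (idx b' q))).
by congr (_ * _); apply: eq_bigr => q _; exact: swap_proj_idem.
Qed.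

Lemma qform_signed_swap_test sy sz hu hv :
  \sum_a \sum_b \sum_a' \sum_b'
      tpow hu a * tpow hv b * signed_swap_test sy sz a b a' b' * tpow hu a' * tpow hv b'
  = (((\sum_x (hu x * sy x) ^+ 2) * (\sum_y (hv y * sz y) ^+ 2)
      + (\sum_x (hu x * sy x) * (hv x * sz x)) ^+ 2) / 2) ^+ t.
Proof.
pose gu c := hu c * sy c; pose gv c := hv c * sz c.
transitivity (\sum_a \sum_b \sum_a' \sum_b' \prod_q
   (gu (idx a q) * gv (idx b q) * swap_proj (idx a q) (idx b q) (idx a' q) (idx b' q)
    * gu (idx a' q) * gv (idx b' q))).
  apply: eq_bigr => a _; apply: eq_bigr => b _; apply: eq_bigr => a' _; apply: eq_bigr => b' _.
  transitivity ((tpow hu a * tpow sy a) * (tpow hv b * tpow sz b) *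
     \prod_q swap_proj (idx a q) (idx b q) (idx a' q) (idx b' q) * (tpow hu a' * tpow sy a') *
     (tpow hv b' * tpow sz b')); first by rewrite /signed_swap_test; ring.
  by rewrite !tpowM /tpow -!big_split.
rewrite (sum4_tensor_prod (fun q c d c' d' => gu c * gv d * swap_proj c d c' d' * gu c' * gv d')).
rewrite -[in RHS](card_ord t) -prodr_const; apply: eq_bigr => q _.
by rewrite qform_swap_proj; congr ((_ * _ + _) / 2); apply: eq_bigr => x _; rewrite expr2.
Qed.

End SwapTest.

Definition decides_MEQ (R : realType) n k d (F : bits n -> 'cV[R[i]]_d) (eps : R) : Prop :=
  forall (i j : 'I_k) (y z : bits n),
    exists M : joint_basis k d -> joint_basis k d -> R[i],
      effect M /\
      forall x : 'I_k -> bits n,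
        let psi := tensor_state (fun l => F (x l)) in
        if MEQ x i j y z
        then 1 - (eps%:C)%C <= accept_prob M psi
        else accept_prob M psi <= (eps%:C)%C.

Section Fingerprint.
Variables (R : realType) (n r t M : nat) (G : code n (2 ^ r)).
Hypothesis code_size : (2 ^ r = 4 * M)%N.
Hypothesis code_balanced : forall x, x != zero_bits n -> (M <= code_weight x G <= 3 * M)%N.

Local Notation m := (2 ^ r)%N.
Local Notation d := (2 ^ (r * t))%N.

Definition code_sign (x : bits n) (c : 'I_m) : R := (-1) ^+ parity x (G c).

Definition fingerprint (x : bits n) (c : 'I_m) : R := code_sign x c / Num.sqrt m%:R.

Lemma code_sign_sq x c : code_sign x c * code_sign x c = 1.
Proof. by rewrite /code_sign -signr_addb addbb. Qed.

Lemma code_signM x w c : code_sign x c * code_sign w c = code_sign (bxor x w) c.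
Proof. by rewrite /code_sign parity_bxorl signr_addb. Qed.

Lemma sum_code_sign w : \sum_c code_sign w c = m%:R - 2 * (code_weight w G)%:R.
Proof.
rewrite /code_weight natr_sum big_distrr /=.
have -> : (m%:R : R) = \sum_(c < m) 1 by rewrite sumr_const card_ord.
rewrite -sumrB.
by apply: eq_bigr => c _; rewrite /code_sign; case: parity => /=; rewrite ?mulr1 ?mulr0 //; lra.
Qed.

Lemma sqrt_m_sq : Num.sqrt (m%:R : R) * Num.sqrt m%:R = m%:R.
Proof. by rewrite -expr2 sqr_sqrtr // ler0n. Qed.

Lemma fingerprint_code_sign x y c : fingerprint x c * code_sign y c = fingerprint (bxor x y) c.
Proof. by rewrite /fingerprint mulrAC code_signM. Qed.

Lemma sum_fingerprintM u v :
  \sum_c fingerprint u c * fingerprint v c = (\sum_c code_sign (bxor u v) c) / m%:R.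
Proof.
rewrite big_distrl /=; apply: eq_bigr => c _.
by rewrite /fingerprint mulrACA code_signM -invfM sqrt_m_sq.
Qed.

Lemma sum_fingerprint_sq x : \sum_c fingerprint x c * fingerprint x c = 1.
Proof.
have m_neq0 : (m%:R : R) != 0 by rewrite pnatr_eq0 expn_eq0.
rewrite sum_fingerprintM (eq_bigr (fun _ => 1)) => [|c _]; last first.
  by rewrite -code_signM code_sign_sq.
by rewrite sumr_const card_ord divff.
Qed.

(* A balanced code separates fingerprints: |<h_u, h_v>| = |1 - 2 wt / m| <= 1/2. *)
Lemma fingerprint_inner_sq_le u v :
  u != v -> (\sum_c fingerprint u c * fingerprint v c) ^+ 2 <= 1 / 4.
Proof.
move=> uv; have w_neq0 : bxor u v != zero_bits n.
  apply: contra uv => /eqP uv0; apply/eqP/ffunP => q.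
  have := congr1 (fun f : bits n => f q) uv0; rewrite /bxor /zero_bits !ffunE.
  by case: (u q); case: (v q).
have /andP[w_ge w_le] := code_balanced w_neq0.
move: w_ge w_le; rewrite -!(ler_nat R) natrM sum_fingerprintM sum_code_sign.
have -> : (m%:R : R) = 4 * M%:R by rewrite code_size natrM.
set w := (code_weight _ _)%:R => w_ge w_le.
have M_gt0 : (0 : R) < M%:R.
  by rewrite ltr0n; have := expn_gt0 2 r; rewrite code_size /=; lia.
have -> : (4 * M%:R - 2 * w) / (4 * M%:R) = (2 * M%:R - w) / (2 * M%:R) by field; lra.
by rewrite expr_div_n ler_pdivrMr; [nra | apply: exprn_gt0; lra].
Qed.

Lemma card_tensor_basis : d = #|{ffun 'I_t -> 'I_m}|.
Proof. by rewrite card_ffun !card_ord expnM. Qed.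

Definition tensor_index (a : 'I_d) : {ffun 'I_t -> 'I_m} :=
  enum_val (cast_ord card_tensor_basis a).

Lemma tensor_index_bij : bijective tensor_index.
Proof.
exists (fun u => cast_ord (esym card_tensor_basis) (enum_rank u)) => [a|u].
  by rewrite /tensor_index enum_valK cast_ordK.
by rewrite /tensor_index cast_ordKV enum_rankK.
Qed.

(* [t] copies of the fingerprint of [x]. *)
Definition fingerprint_state (x : bits n) : 'cV[R[i]]_d :=
  \col_a (tpow tensor_index (fingerprint x) a)%:C%C.

Lemma fingerprint_state_unit x : is_unit_vec (fingerprint_state x).
Proof.
rewrite /is_unit_vec; transitivity
    ((\sum_a tpow tensor_index (fingerprint x) a * tpow tensor_index (fingerprint x) a)%:C%C).
  by rewrite rmorph_sum; apply: eq_bigr => a _; rewrite !mxE rmorphM /= conj_realC.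
by rewrite (sum_tpow_sq tensor_index_bij) sum_fingerprint_sq expr1n.
Qed.

Local Notation tensor_amp x f := (\prod_l tpow tensor_index (fingerprint (x l)) (f l)).

Lemma accept_prob_real k (K : joint_basis k d -> joint_basis k d -> R) (x : 'I_k -> bits n) :
  accept_prob (fun f g => (K f g)%:C%C) (tensor_state (fun l => fingerprint_state (x l)))
  = (\sum_(f : joint_basis k d) \sum_(g : joint_basis k d)
       tensor_amp x f * K f g * tensor_amp x g)%:C%C.
Proof.
have ampE (f : joint_basis k d) :
    \prod_(l < k) fingerprint_state (x l) (f l) 0 = (tensor_amp x f)%:C%C.
  by rewrite rmorph_prod; apply: eq_bigr => l _; rewrite mxE.
rewrite /accept_prob /qform /tensor_state rmorph_sum; apply: eq_bigr => f _.
rewrite rmorph_sum; apply: eq_bigr => g _.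
by rewrite !ampE !rmorphM /= conj_realC.
Qed.

Lemma sum_tensor_amp_sq k (x : 'I_k -> bits n) :
  \sum_(f : joint_basis k d) tensor_amp x f * tensor_amp x f = 1.
Proof.
under eq_bigr => f _ do rewrite -big_split /=.
rewrite -(bigA_distr_bigA (fun l a =>
  tpow tensor_index (fingerprint (x l)) a * tpow tensor_index (fingerprint (x l)) a)) /=.
by apply: big1 => l _; rewrite (sum_tpow_sq tensor_index_bij) sum_fingerprint_sq expr1n.
Qed.

Lemma accept_prob_scalar k (c : R) (x : 'I_k -> bits n) :
  accept_prob (fun f g : joint_basis k d => ((f == g)%:R * c)%:C%C)
    (tensor_state (fun l => fingerprint_state (x l))) = c%:C%C.
Proof.
rewrite accept_prob_real; congr (_%:C%C).
transitivity (\sum_(f : joint_basis k d) c * (tensor_amp x f * tensor_amp x f)); last first.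
  by rewrite -big_distrr /= sum_tensor_amp_sq mulr1.
apply: eq_bigr => f _.
transitivity (\sum_(g : joint_basis k d) (f == g)%:R * (c * (tensor_amp x f * tensor_amp x g))).
  by apply: eq_bigr => g _; ring.
by rewrite sum_deltal.
Qed.

Definition swap_test_referee k (i j : 'I_k) (y z : bits n) (f g : joint_basis k d) : R :=
  pair_op i j (signed_swap_test tensor_index (code_sign y) (code_sign z)) f g.

Lemma accept_prob_swap_test k (i j : 'I_k) (y z : bits n) (x : 'I_k -> bits n) : i != j ->
  accept_prob (fun f g => (swap_test_referee i j y z f g)%:C%C)
    (tensor_state (fun l => fingerprint_state (x l)))
  = ((((1 + (\sum_c fingerprint (bxor (x i) y) c * fingerprint (bxor (x j) z) c) ^+ 2) / 2)
       ^+ t)%:C%C).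
Proof.
move=> neq_ij; rewrite accept_prob_real; congr (_%:C%C).
rewrite (qform_pair_op neq_ij _ (v := fun l => tpow tensor_index (fingerprint (x l)))); last first.
  by move=> l; rewrite (sum_tpow_sq tensor_index_bij) sum_fingerprint_sq expr1n.
rewrite (qform_signed_swap_test tensor_index_bij).
under eq_bigr do rewrite fingerprint_code_sign expr2.
under [\sum_c (_ * _) ^+ 2]eq_bigr do rewrite fingerprint_code_sign expr2.
under [\sum_c (_ * _) * (_ * _)]eq_bigr do rewrite !fingerprint_code_sign.
by rewrite !sum_fingerprint_sq mul1r.
Qed.

Lemma MEQ_same_player k (x : 'I_k -> bits n) i y z : MEQ x i i y z = (y == z).
Proof.
apply/eqP/eqP => [|->] // eq_xy; apply/ffunP => q.
by have := congr1 (fun f : bits n => f q) eq_xy; rewrite /bxor !ffunE; case: (x i q) => /=;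
  [move/negb_inj | ].
Qed.

Lemma decides_MEQ_half k (eps : R) : 1 / 2 <= eps -> decides_MEQ k fingerprint_state eps.
Proof.
move=> eps_ge i j y z; exists (fun f g => ((f == g)%:R * (1 / 2))%:C%C); split.
  by apply: effect_scalar; lra.
move=> x /=; rewrite accept_prob_scalar.
by case: (MEQ x i j y z); rewrite lecE /= ?subr0 ?eqxx /=; lra.
Qed.

Lemma decides_MEQ_swap_test k (eps : R) :
  (5 / 8) ^+ t <= eps -> decides_MEQ k fingerprint_state eps.
Proof.
move=> eps_ge i j y z; have eps_ge0 : 0 <= eps by apply: le_trans eps_ge; apply: exprn_ge0; lra.
have [<- | neq_ij] := eqVneq i j.
  exists (fun f g => ((f == g)%:R * (y == z)%:R)%:C%C); split.
    by apply: effect_scalar; case: (y == z) => /=; lra.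
  move=> x /=; rewrite accept_prob_scalar MEQ_same_player.
  by case: (y == z) => /=; rewrite lecE /= ?subr0 ?eqxx /=; lra.
exists (fun f g => (swap_test_referee i j y z f g)%:C%C); split.
  apply: effect_sym_idem => [f g|f g]; first by apply: pair_op_sym; exact: signed_swap_test_sym.
  apply: (pair_op_idem neq_ij); apply: (signed_swap_test_idem tensor_index_bij);
  exact: code_sign_sq.
move=> x /=; rewrite accept_prob_swap_test // /MEQ.
have [-> | neq_uv] := eqVneq (bxor (x i) y) (bxor (x j) z).
  rewrite sum_fingerprint_sq expr1n (_ : (1 + 1) / 2 = 1 :> R) ?expr1n; last by field.
  by rewrite lecE /= subr0 eqxx /=; lra.
rewrite lecR; apply: le_trans eps_ge; apply: lerXn2r; rewrite ?nnegrE; try lra.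
  by apply: divr_ge0; [apply: addr_ge0; [lra | exact: sqr_ge0] | lra].
by have := fingerprint_inner_sq_le neq_uv; lra.
Qed.

End Fingerprint.

Lemma ln_ge_mul_ln2 (R : realType) (a : nat) (x : R) :
  (2 ^ a)%:R <= x -> a%:R * ln (2 : R) <= ln x.
Proof.
move=> le_x; have pow_gt0 : (0 : R) < 2 ^+ a by rewrite exprn_gt0.
have x_gt0 : 0 < x by apply: lt_le_trans le_x; rewrite natrX.
have : ln ((2 : R) ^+ a) <= ln x by rewrite ler_ln ?posrE // -natrX.
by rewrite lnXn // mulr_natl.
Qed.

(* r = log2 n + 4 makes the code length m = 2^r at least 8 (n + 1). *)
Lemma code_parameters (R : realType) n : (2 <= n)%N ->
  exists r M, [/\ (2 ^ r = 4 * M)%N, (2 * n.+1 <= M)%N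
               & r%:R * ln (2 : R) <= 5 * ln (n%:R : R)].
Proof.
move=> n_ge2; set L := trunc_log 2 n.
exists L.+4, (2 ^ L.+2)%N; split; first by rewrite !expnS; lia.
  by have := trunc_log_ltn n (isT : (1 < 2)%N); rewrite -/L !expnS; lia.
have ln_n : L%:R * ln (2 : R) <= ln (n%:R : R).
  by apply: ln_ge_mul_ln2; rewrite ler_nat trunc_logP //; lia.
have ln2_n : 1%:R * ln (2 : R) <= ln (n%:R : R) by apply: ln_ge_mul_ln2; rewrite ler_nat.
by rewrite -addn4 natrD mulrDl; lra.
Qed.

(* [t] = 2 (log2 (1/eps) + 1) copies push the error (5/8)^t of the repeated swap test below eps. *)
Lemma repetition_parameters (R : realType) (eps : R) : 0 < eps < 1 / 2 ->
  exists t, (5 / 8) ^+ t <= eps /\ t%:R * ln (2 : R) <= 4 * ln (1 / eps).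
Proof.
move=> /andP[eps_gt0 eps_lt]; have inv_gt2 : 2 < 1 / eps by rewrite ltr_pdivlMr //; lra.
set N := Num.truncn (1 / eps); set L := trunc_log 2 N.
have /andP[N_le N_gt] : N%:R <= 1 / eps < N.+1%:R by apply: truncn_itv; lra.
have N_gt0 : (0 < N)%N by rewrite -(ltr_nat R); lra.
have ln_inv : L%:R * ln (2 : R) <= ln (1 / eps).
  by apply: ln_ge_mul_ln2; apply: le_trans N_le; rewrite ler_nat trunc_logP.
have ln2_inv : 1%:R * ln (2 : R) <= ln (1 / eps) by apply: ln_ge_mul_ln2; lra.
exists (2 * L.+1)%N; split; last by rewrite natrM -addn1 natrD; lra.
rewrite exprM; apply: (@le_trans _ _ ((1 / 2) ^+ L.+1)).
  by apply: lerXn2r; rewrite ?nnegrE; lra.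
rewrite expr_div_n expr1n ler_pdivrMr ?exprn_gt0 //.
have N_pow : (N.+1%:R : R) <= 2 ^+ L.+1 by rewrite -natrX ler_nat trunc_log_ltn.
have : 1 < eps * N.+1%:R by move: N_gt; rewrite ltr_pdivrMr // mulrC.
by have := ler_wpM2l (ltW eps_gt0) N_pow; lra.
Qed.

Lemma qubit_count_le (R : realType) (r t : nat) (P Q : R) :
  r%:R * ln (2 : R) <= 5 * P -> t%:R * ln (2 : R) <= 4 * Q ->
  (r * t)%:R <= 20 / ln (2 : R) ^+ 2 * P * Q.
Proof.
move=> le_r le_t; have ln2_gt0 : (0 : R) < ln 2 by rewrite ln_gt0 // ltr1n.
have -> : (r * t)%:R = (r%:R * ln (2 : R)) * (t%:R * ln 2) / ln 2 ^+ 2 :> R.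
  by rewrite natrM; field; rewrite gt_eqF.
have -> : 20 / ln (2 : R) ^+ 2 * P * Q = (5 * P) * (4 * Q) / ln 2 ^+ 2 by field; rewrite gt_eqF.
by rewrite ler_pM2r ?invr_gt0 ?exprn_gt0 // ler_pM // mulr_ge0 // ltW.
Qed.

Theorem lemma1 (R : realType) :
  exists C : R, 0 < C /\
  forall (n k : nat) (eps : R), (2 <= n)%N -> (2 <= k)%N -> 0 < eps < 1 ->
  exists s : nat,
    (s%:R <= C * ln (n%:R : R) * ln (1 / eps)) /\
    exists F : bits n -> 'cV[R[i]]_(2 ^ s),
      (forall x : bits n, is_unit_vec (F x)) /\
      forall (i j : 'I_k) (y z : bits n),
        exists M : joint_basis k (2 ^ s) -> joint_basis k (2 ^ s) -> R[i],
          effect M /\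
          forall x : 'I_k -> bits n,
            let psi := tensor_state (fun l => F (x l)) in
            if MEQ x i j y z
            then 1 - (eps%:C)%C <= accept_prob M psi
            else accept_prob M psi <= (eps%:C)%C.
Proof.
exists (20 / ln (2 : R) ^+ 2); split.
  by rewrite divr_gt0 // exprn_gt0 // ln_gt0 // ltr1n.
move=> n k eps n_ge2 _ /andP[eps_gt0 eps_lt1].
have [r [M [code_size M_ge qubits_r]]] := code_parameters R n_ge2.
have [G0 G0_balanced] := balanced_code_exists M_ge.
move: G0 G0_balanced; rewrite -code_size => G G_balanced.
have [eps_lt | eps_ge] := ltP eps (1 / 2).
  have [|t [t_eps qubits_t]] := @repetition_parameters R eps; first by rewrite eps_gt0.
  exists (r * t)%N; split; first exact: qubit_count_le.
  exists (fingerprint_state R t G); split; first exact: fingerprint_state_unit.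
  exact: (decides_MEQ_swap_test code_size G_balanced).
exists (r * 0)%N; split.
  by apply: qubit_count_le; rewrite // mul0r mulr_ge0 // ln_ge0 // ler_pdivlMr // mul1r ltW.
exists (fingerprint_state R 0 G); split; first exact: fingerprint_state_unit.
exact: decides_MEQ_half.
Qed.
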